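(* Let $\eta\in(0,1)$, $B_1,\dots,B_H>0$, and reward functions $r_h:\mathcal{X}_h\times\mathcal{A}\to[-B_h,B_h]$ for $h\in[H]$. Define the extended rewards $\bar r_h(x,a)=r_h(x,a)$ for $(x,a)\in\mathcal{X}_h\times\mathcal{A}$ and $\bar r_h(x,a)=0$ if $x=\mathfrak{t}_h$ or $a=\mathfrak{a}$. Then $$\sup_{\pi\in\bar\Pi_\eta}\bar{\mathbb{E}}^\pi\Big[\sum_{h=1}^H\bar r_h(x_h,a_h)\Big]\ge\sup_{\pi\in\bar\Pi_{\mathrm{M}}}\bar{\mathbb{E}}^\pi\Big[\sum_{h=1}^H\bar r_h(x_h,a_h)\Big]-2Hd^{3/2}\eta\sum_{h=1}^HB_h,$$ where $\bar{\mathbb{E}}^\pi$ denotes expectation over trajectories of $\bar{\mathcal{M}}$ under $\pi$.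
   Context: Setting (Low-Rank MDP). Fix horizon $H\in\mathbb{N}$, dimension $d\in\mathbb{N}$, a finite action set $\mathcal{A}$ with $|\mathcal{A}|=A$, and a measurable state space $\mathcal{X}=\mathcal{X}_1\sqcup\cdots\sqcup\mathcal{X}_H$ (disjoint layers) carrying a $\sigma$-finite measure $\nu$. The MDP $\mathcal{M}$ has an initial distribution $\rho$ on $\mathcal{X}_1$ and, for each $h\in[H-1]$, measurable maps $\phi^\star_h:\mathcal{X}_h\times\mathcal{A}\to\mathbb{R}^d$ and $\mu^\star_{h+1}:\mathcal{X}_{h+1}\to\mathbb{R}^d$ such that for every $(x,a)\in\mathcal{X}_h\times\mathcal{A}$ the function $x'\mapsto\mu^\star_{h+1}(x')^\top\phi^\star_h(x,a)$ is a probability density w.r.t. $\nu$ on $\mathcal{X}_{h+1}$; this density is the transition kernel $T_h(\cdot\mid x,a)$. Normalization: $\|\phi^\star_h(x,a)\|\le 1$ for all $h,x,a$, and $\|\int_{\mathcal{X}_h}\mu^\star_h(x)g(x)\,d\nu(x)\|\le\sqrt d$ for every measurable $g:\mathcal{X}_h\to[0,1]$. $\|\cdot\|$ is the Euclidean norm. Extended MDP $\bar{\mathcal{M}}$: add terminal states $\mathfrak{t}_1,\dots,\mathfrak{t}_H$ (with $\bar{\mathcal{X}}_h=\mathcal{X}_h\cup\{\mathfrak{t}_h\}$) and a terminal action $\mathfrak{a}$ (with $\bar{\mathcal{A}}=\mathcal{A}\cup\{\mathfrak{a}\}$). Transitions from $(x,a)\in\mathcal{X}_h\times\mathcal{A}$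 are as in $\mathcal{M}$; taking $\mathfrak{a}$ in any state of layer $h$, or any action in $\mathfrak{t}_h$, leads deterministically to $\mathfrak{t}_{h+1}$; the initial distribution is $\rho$. The base measure is $\bar\nu=\nu+\sum_h\delta_{\mathfrak{t}_h}$, and for $x\in\bar{\mathcal{X}}_h$, $\bar d^\pi(x)$ is the density w.r.t. $\bar\nu$ of the law of $x_h$ under $\pi$ in $\bar{\mathcal{M}}$. $\bar\Pi_{\mathrm{M}}$ is the set of randomized Markov policies of $\bar{\mathcal{M}}$ (with $\pi(\mathfrak{t}_h)=\mathfrak{a}$). Reachable states: for $h\ge2$ and $\Pi'\subseteq\bar\Pi_{\mathrm{M}}$, $\mathcal{X}_{h,\eta}(\Pi'):=\{x\in\mathcal{X}_h:\exists\pi\in\Pi',\ \bar d^\pi(x)\ge\eta\|\mu^\star_h(x)\|\}$; by convention $\mathcal{X}_{1,\eta}(\Pi')=\mathcal{X}_1$. Truncated policy class: $\bar\Pi_{0,\eta}=\bar\Pi_{\mathrm{M}}$ and for $h\ge1$, $\pi\in\bar\Pi_{h,\eta}$ iff there exists $\pi'\in\bar\Pi_{h-1,\eta}$ with $\pi(x)=\pi'(x)$ for all $x$ in layers $t\neq h$, and for $x\in\mathcal{X}_h$: $\pi(x)=\pi'(x)$ if $x\in\mathcal{X}_{h,\eta}(\bar\Pi_{h-1,\eta})$ and $\pi(x)=\mathfrak{a}$ otherwise (and $\pi(\mathfrak{t}_h)=\mathfrak{a}$). Set $\bar\Pi_\eta:=\bar\Pi_{H,\eta}$. *)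

From HB Require Import structures.
From mathcomp Require Import all_boot all_order all_algebra.
From mathcomp Require Import all_classical all_reals all_analysis.
Unset Implicit Arguments.
Unset Strict Implicit.
Unset Printing Implicit Defensive.
Import Order.TTheory GRing.Theory Num.Theory.
Import numFieldNormedType.Exports.
Local Open Scope classical_set_scope.
Local Open Scope ring_scope.

(* Layers are indexed by h : nat; layer h is the measurable type X h (only
   h = 1..H are used).  The extended MDP is encoded without new types:
   the terminal state t_h is "the trajectory has stopped before layer h"
   and the terminal action is [None : option A]. *)

Section Vectors.
Context {R : realType} {dim : nat}.
Definition dotv (u v : 'I_dim -> R) : R := \sum_(i < dim) u i * v i.
Definition enorm (u : 'I_dim -> R) : R := Num.sqrt (\sum_(i < dim) u i ^+ 2).
End Vectors.

Section LowRankMDP.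
Context {R : realType} {dX : nat -> measure_display}
  {X : forall h : nat, measurableType (dX h)} {A : finType} {dim : nat}.
Context (nu : forall h, {measure set (X h) -> \bar R})
        (rho : probability (X 1) R)
        (phi : forall h, X h -> A -> 'I_dim -> R)
        (mu : forall h, X h -> 'I_dim -> R).

(* A (randomized Markov) policy of the extended MDP: at layer h, in a
   non-terminal state x, pi h x b is the probability of action b : option A
   (None = the terminal action).  In terminal states the terminal action is
   forced, so nothing needs to be specified there. *)
Definition policy := forall h : nat, X h -> option A -> R.

Definition markov_policy (pi : policy) : Prop :=
  forall h : nat,
    (forall x b, 0 <= pi h x b) /\ (forall x, \sum_(b : option A) pi h x b = 1) /\
    (forall b, measurable_fun setT (fun x => pi h x b)).

Definition trans_dens (h : nat) (x : X h) (a : A) (y : X h.+1) : R :=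
  dotv (mu h.+1 y) (phi h x a).

(* one step of the extended chain under pi: for f on layer h+1,
   (Pstep pi h f) x = E[ f(x_{h+1}) 1{x_{h+1} non-terminal} | x_h = x ] *)
Definition Pstep (pi : policy) (h : nat) (f : X h.+1 -> R) : X h -> R :=
  fun x => \sum_(a : A) pi h x (Some a) *
             Rintegral (nu h.+1) setT (fun y => f y * trans_dens h x a y).

(* Eaux pi k f = \bar E^pi [ f(x_{k+1}) 1{x_{k+1} \in X_{k+1}} ] *)
Fixpoint Eaux (pi : policy) (k : nat) : (X k.+1 -> R) -> R :=
  match k as k0 return (X k0.+1 -> R) -> R with
  | 0 => fun f => Rintegral rho setT f
  | k'.+1 => fun f => Eaux pi k' (Pstep pi k'.+1 f)
  end.

(* expected reward \bar E^pi [ \sum_{h=1}^H \bar r_h(x_h, a_h) ], where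
   \bar r_h = r_h on X_h x A and 0 at terminal states / terminal action *)
Definition value (H : nat) (r : forall h, X h -> A -> R) (pi : policy) : R :=
  \sum_(1 <= h < H.+1)
    match h as h0 return (X h0 -> A -> R) -> R with
    | 0 => fun _ => 0
    | k.+1 => fun rk => Eaux pi k (fun x => \sum_(a : A) pi k.+1 x (Some a) * rk x a)
    end (r h).

(* density \bar d^pi(x) w.r.t. nu of the law of x_{k+2}, at x in X_{k+2}:
   mu*_{k+2}(x)^T \bar E^pi[ phi*_{k+1}(x_{k+1}, a_{k+1}) 1{x_{k+1}, a_{k+1} non-terminal} ] *)
Definition occ_dens (pi : policy) (k : nat) (x : X k.+2) : R :=
  dotv (mu k.+2 x)
       (fun i => Eaux pi k (fun y => \sum_(a : A) pi k.+1 y (Some a) * phi k.+1 y a i)).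

(* reachable states X_{h,eta}(Pi') (X_{1,eta} = X_1 by convention) *)
Definition reachable (eta : R) (Pi' : set policy) (h : nat) : set (X h) :=
  match h as h0 return set (X h0) with
  | k.+2 => [set x | exists2 pi, Pi' pi & eta * enorm (mu k.+2 x) <= occ_dens pi k x]
  | _ => setT
  end.

Definition term_act : option A -> R := fun b => if b is None then 1 else 0.

Fixpoint trunc_class (eta : R) (h : nat) : set policy :=
  match h with
  | 0 => markov_policy
  | k.+1 => [set pi | exists2 pi', trunc_class eta k pi' &
              (forall t : nat, t <> k.+1 -> pi t = pi' t) /\
              (forall x : X k.+1,
                  (reachable eta (trunc_class eta k) k.+1 x -> pi k.+1 x = pi' k.+1 x) /\
                  (~ reachable eta (trunc_class eta k) k.+1 x -> pi k.+1 x = term_act))]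
  end.

End LowRankMDP.

From HB Require Import structures.
From mathcomp Require Import all_boot all_order all_algebra.
From mathcomp Require Import all_classical all_reals all_analysis.
From mathcomp Require Import measurable_realfun ring lra zify.
Import Order.TTheory GRing.Theory Num.Theory.
Import numFieldNormedType.Exports.
Local Open Scope classical_set_scope.
Local Open Scope ring_scope.

(* Truncating a policy at layer h, i.e. taking the terminal action in every
   state of X_h that no policy of the previous truncated class reaches with
   density at least eta ||mu*_h||, loses at most (sum_h B_h) times the
   probability of visiting such a state.  By the low-rank structure this
   probability is the integral over the unreached states of the occupancy
   density mu*_h(x)^T E[phi*_{h-1}(x_{h-1}, a_{h-1})]; there it is below
   eta ||mu*_h(x)|| <= eta sum_c |mu*_h(x)_c|, and each integral of |mu*_h(.)_c|
   is at most 2 sqrt d by the normalization of mu* applied to the indicators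
   of {mu*_h(.)_c >= 0} and its complement.  Truncating the H layers one after
   the other thus costs at most H d (2 sqrt d) eta sum_h B_h. *)

Lemma sum_option (V : nmodType) (A : finType) (F : option A -> V) :
  \sum_(b : option A) F b = F None + \sum_(a : A) F (Some a).
Proof.
rewrite (bigD1 None) //=; congr (_ + _).
rewrite (reindex_omap Some id); last by case.
by apply: eq_bigl => a; rewrite eqxx.
Qed.

Lemma indicCB (T : Type) (R : pzRingType) (S : set T) (x : T) :
  \1_(~` S) x = 1 - \1_S x :> R.
Proof. by rewrite indicC indicE; case: (x \in S); rewrite ?subrr ?subr0. Qed.

Lemma powR32_sqrt (R : realType) (x : R) : 0 <= x -> x `^ (3 / 2) = x * Num.sqrt x.
Proof.
move=> x0; rewrite (_ : 3 / 2 = 1 + 2^-1); last by field.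
rewrite powRD ?powRr1 ?powR12_sqrt //.
by apply/implyP => /eqP h0; exfalso; lra.
Qed.

Lemma sup_le_sup_add (R : realType) (S T : set R) (c : R) :
  S !=set0 -> has_sup T -> (forall x, S x -> exists2 y, T y & x <= y + c) ->
  sup S <= sup T + c.
Proof.
move=> S0 supT ST; apply: ge_sup => // x /ST [y Ty xy].
by apply: le_trans xy _; rewrite lerD2r; exact: sup_upper_bound.
Qed.

Section EuclideanNorm.
Context {R : realType} {dim : nat}.

Lemma ler_coord_enorm (u : 'I_dim -> R) c : `|u c| <= enorm u.
Proof.
rewrite /enorm -sqrtr_sqr ler_sqrt; last by apply: sumr_ge0 => i _; exact: sqr_ge0.
rewrite (bigD1 c) //= lerDl; apply: sumr_ge0 => i _; exact: sqr_ge0.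
Qed.

Lemma enorm_le_sum_norm (u : 'I_dim -> R) : enorm u <= \sum_c `|u c|.
Proof.
have h0 : 0 <= \sum_c `|u c| by apply: sumr_ge0 => i _.
rewrite /enorm -(ger0_norm h0) -sqrtr_sqr ler_sqrt; last exact: sqr_ge0.
rewrite expr2 mulr_suml; apply: ler_sum => i _.
rewrite -[u i ^+ 2]ger0_norm ?sqr_ge0 // expr2 normrM ler_wpM2l //.
by rewrite (bigD1 i) //= lerDl; apply: sumr_ge0.
Qed.

End EuclideanNorm.

Section BoundedMeasurable.
Context {d} {T : measurableType d} {R : realType}.

Definition bounded_mfun (f : T -> R) :=
  measurable_fun setT f /\ exists2 M, 0 <= M & forall x, `|f x| <= M.

Lemma bounded_mfun_cst (c : R) : bounded_mfun (fun=> c).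
Proof. by split; [exact: measurable_cst | exists `|c|]. Qed.

Lemma bounded_mfun_indic (S : set T) : measurable S -> bounded_mfun (\1_S).
Proof.
move=> mS; split; first exact: measurable_indic.
by exists 1 => // x; rewrite indicE; case: (x \in S); rewrite ?normr1 ?normr0.
Qed.

Lemma bounded_mfunD (f g : T -> R) :
  bounded_mfun f -> bounded_mfun g -> bounded_mfun (fun x => f x + g x).
Proof.
move=> [mf [Mf Mf0 fM]] [mg [Mg Mg0 gM]]; split; first exact: measurable_funD.
exists (Mf + Mg); first exact: addr_ge0.
by move=> x; apply: le_trans (ler_normD _ _) _; exact: lerD.
Qed.

Lemma bounded_mfunM (f g : T -> R) :
  bounded_mfun f -> bounded_mfun g -> bounded_mfun (fun x => f x * g x).
Proof.
move=> [mf [Mf Mf0 fM]] [mg [Mg Mg0 gM]]; split; first exact: measurable_funM.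
exists (Mf * Mg); first exact: mulr_ge0.
by move=> x; rewrite normrM ler_pM.
Qed.

Lemma bounded_mfunZ (c : R) (f : T -> R) :
  bounded_mfun f -> bounded_mfun (fun x => c * f x).
Proof. exact/bounded_mfunM/bounded_mfun_cst. Qed.

Lemma bounded_mfun_sum (I : Type) (s : seq I) (F : I -> T -> R) :
  (forall i, bounded_mfun (F i)) -> bounded_mfun (fun x => \sum_(i <- s) F i x).
Proof.
move=> bF; elim: s => [|i s IH].
  have -> : (fun x => \sum_(i <- [::]) F i x) = fun=> 0 by apply/funext => x; rewrite big_nil.
  exact: bounded_mfun_cst.
have -> : (fun x => \sum_(j <- i :: s) F j x) = fun x => F i x + \sum_(j <- s) F j x.
  by apply/funext => x; rewrite big_cons.
exact: bounded_mfunD.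
Qed.

Lemma bounded_mfun_integrable (P : probability T R) (f : T -> R) :
  bounded_mfun f -> P.-integrable setT (EFin \o f).
Proof.
move=> [mf [M M0 fM]].
apply: (le_integrable measurableT _ _ (finite_measure_integrable_cst P M measurableT)).
  exact/measurable_EFinP.
by move=> x _ /=; rewrite lee_fin (ger0_norm M0).
Qed.

Lemma norm_Rintegral_prob_le (P : probability T R) (f : T -> R) (M : R) :
  measurable_fun setT f -> 0 <= M -> (forall x, `|f x| <= M) ->
  `|Rintegral P setT f| <= M.
Proof.
move=> mf M0 fM.
have intf : P.-integrable setT (EFin \o f) by apply: bounded_mfun_integrable; split => //; exists M.
apply: le_trans (le_normr_Rintegral measurableT intf) _.
apply: le_trans (@le_Rintegral _ _ _ P setT _ (fun=> M) measurableT _ _ _) _.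
- exact: integrable_norm intf.
- exact/bounded_mfun_integrable/bounded_mfun_cst.
- by move=> x _; exact: fM.
rewrite Rintegral_cst //.
by move: (probability_setT P) => /= ->; rewrite mulr1.
Qed.

Variable m : {measure set T -> \bar R}.

Lemma integrable_sumr (I : Type) (s : seq I) (F : I -> T -> R) :
  (forall i, m.-integrable setT (EFin \o F i)) ->
  m.-integrable setT (EFin \o (fun x => \sum_(i <- s) F i x)).
Proof.
move=> intF.
apply: (eq_integrable measurableT (fun x => \sum_(i <- s) (EFin \o F i) x)) => //.
  by move=> x _ /=; rewrite sumEFin.
by apply: (integrable_sum measurableT) => i _; exact: intF.
Qed.

Lemma Rintegral_sum (I : Type) (s : seq I) (F : I -> T -> R) :
  (forall i, m.-integrable setT (EFin \o F i)) ->
  Rintegral m setT (fun x => \sum_(i <- s) F i x) = \sum_(i <- s) Rintegral m setT (F i).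
Proof.
move=> intF; elim: s => [|i s IH].
  under eq_Rintegral do rewrite big_nil.
  by rewrite Rintegral_cst // mul0r big_nil.
under eq_Rintegral do rewrite big_cons.
by rewrite RintegralD ?IH ?big_cons //; exact: integrable_sumr.
Qed.

Lemma integrableZl_fun (c : R) (f : T -> R) :
  m.-integrable setT (EFin \o f) -> m.-integrable setT (EFin \o (fun x => c * f x)).
Proof.
move=> intf; apply: (eq_integrable measurableT (fun x => (c%:E * (EFin \o f) x)%E)).
  by move=> x _ /=; rewrite EFinM.
exact: integrableZl.
Qed.

End BoundedMeasurable.

Section LowRankMDP.
Context {R : realType} {dX : nat -> measure_display}
  {X : forall h : nat, measurableType (dX h)} {A : finType} {H dim : nat}
  {nu : forall h : nat, {measure set (X h) -> \bar R}}
  {rho : probability (X 1) R}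
  {phi : forall h : nat, X h -> A -> 'I_dim -> R}
  {mu : forall h : nat, X h -> 'I_dim -> R}.
Hypotheses
  (phi_meas : forall (h : nat) (a : A) (i : 'I_dim),
      measurable_fun setT (fun x : X h => phi h x a i))
  (mu_meas : forall (h : nat) (i : 'I_dim), measurable_fun setT (fun x : X h => mu h x i))
  (enorm_phi_le1 : forall h : nat, (1 <= h < H)%N ->
      forall (x : X h) (a : A), enorm (phi h x a) <= 1)
  (trans_dens_pdf : forall h : nat, (1 <= h < H)%N -> forall (x : X h) (a : A),
      (forall y : X h.+1, 0 <= dotv (mu h.+1 y) (phi h x a)) /\
      (\int[nu h.+1]_(y in setT) (dotv (mu h.+1 y) (phi h x a))%:E = 1)%E)
  (mu_integral_bounded : forall h : nat, (2 <= h <= H)%N -> forall g : X h -> R,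
      measurable_fun setT g -> (forall x, 0 <= g x <= 1) ->
      (forall i : 'I_dim, (nu h).-integrable setT (fun x => (mu h x i * g x)%:E)) /\
      enorm (fun i : 'I_dim => Rintegral (nu h) setT (fun x => mu h x i * g x))
        <= Num.sqrt (dim%:R)).

Local Notation E := (Eaux nu rho phi mu).
Local Notation P := (Pstep nu phi mu).
Local Notation dens := (trans_dens phi mu).

Lemma integrable_mu_mul {h} i {g : X h -> R} {M} : (2 <= h <= H)%N ->
  measurable_fun setT g -> (forall x, `|g x| <= M) ->
  (nu h).-integrable setT (EFin \o (fun x => mu h x i * g x)).
Proof.
move=> hH mg gM.
have c01 (x : X h) : 0 <= (fun=> 1 : R) x <= 1 by rewrite ler01 lexx.
have [intmu _] := mu_integral_bounded h hH _ (measurable_cst (1 : R)) c01.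
apply: (le_integrable measurableT _ _ (integrableZl measurableT `|M| (intmu i))).
  by apply/measurable_EFinP; apply: measurable_funM.
move=> x _ /=; rewrite lee_fin mulr1 normrM [X in _ <= X]normrM mulrC.
by rewrite normr_id ler_wpM2r // (le_trans (gM x)) // ler_norm.
Qed.

Lemma Rintegral_norm_mu_le h c : (2 <= h <= H)%N ->
  Rintegral (nu h) setT (fun x => `|mu h x c|) <= 2 * Num.sqrt dim%:R.
Proof.
move=> hH.
pose G := (fun x => mu h x c) @^-1` [set` `[(0:R), +oo[%R].
have mG : measurable G.
  by have := mu_meas h c measurableT _ (measurable_itv `[(0:R), +oo[%R); rewrite setTI.
have GE x : (x \in G) = (0 <= mu h x c).
  by apply/idP/idP => [/set_mem|h0]; [|apply/mem_set];
     rewrite /G /preimage /= in_itv /= andbT.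
have int_mu_indic (S : set (X h)) : measurable S ->
    (nu h).-integrable setT (EFin \o (fun x => mu h x c * \1_S x)).
  move=> mS; have [mind [M _ indM]] := bounded_mfun_indic (R := R) _ mS.
  by have := integrable_mu_mul c hH mind indM.
have mu_indic_le (S : set (X h)) : measurable S ->
    `|Rintegral (nu h) setT (fun x => mu h x c * \1_S x)| <= Num.sqrt dim%:R.
  move=> mS; have ind01 x : 0 <= (\1_S : X h -> R) x <= 1.
    by rewrite indicE; case: (x \in S); rewrite ?ler01 ?lexx.
  have [mind _] := bounded_mfun_indic (R := R) _ mS.
  have [_ bnd] := mu_integral_bounded h hH _ mind ind01.
  exact: le_trans (ler_coord_enorm _ c) bnd.
have -> : Rintegral (nu h) setT (fun x => `|mu h x c|) =
    Rintegral (nu h) setT (fun x => mu h x c * \1_G x) -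
    Rintegral (nu h) setT (fun x => mu h x c * \1_(~` G) x).
  rewrite -RintegralB ?int_mu_indic //; last exact: measurableC.
  apply: eq_Rintegral => x _; rewrite indicCB indicE GE.
  case: (lerP 0 (mu h x c)) => m0 /=; first by rewrite ger0_norm //; ring.
  by rewrite ltr0_norm //; ring.
move: (mu_indic_le G mG) (mu_indic_le _ (measurableC mG)).
rewrite !ler_norml => /andP[? ?] /andP[? ?]; lra.
Qed.

Lemma integrable_mul_trans_dens {h} (x : X h) a {f : X h.+1 -> R} {M} : (1 <= h < H)%N ->
  measurable_fun setT f -> (forall y, `|f y| <= M) ->
  (nu h.+1).-integrable setT (EFin \o (fun y => f y * dens h x a y)).
Proof.
move=> hH mf fM.
apply: (eq_integrable measurableT (EFin \o (fun y => \sum_i phi h x a i * (mu h.+1 y i * f y)))).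
  move=> y _ /=; congr EFin; rewrite /trans_dens /dotv mulr_sumr.
  by apply: eq_bigr => i _; ring.
by apply: integrable_sumr => i; apply/integrableZl_fun/(integrable_mu_mul _ hH mf fM).
Qed.

Lemma Rintegral_mul_trans_densE {h} (x : X h) a {f : X h.+1 -> R} {M} : (1 <= h < H)%N ->
  measurable_fun setT f -> (forall y, `|f y| <= M) ->
  Rintegral (nu h.+1) setT (fun y => f y * dens h x a y) =
  \sum_i phi h x a i * Rintegral (nu h.+1) setT (fun y => mu h.+1 y i * f y).
Proof.
move=> hH mf fM.
have intmu i := integrable_mu_mul i hH mf fM.
have -> : Rintegral (nu h.+1) setT (fun y => f y * dens h x a y) =
    Rintegral (nu h.+1) setT (fun y => \sum_i phi h x a i * (mu h.+1 y i * f y)).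
  apply: eq_Rintegral => y _; rewrite /trans_dens /dotv mulr_sumr.
  by apply: eq_bigr => i _; ring.
rewrite Rintegral_sum => [|i]; last exact: integrableZl_fun.
by apply: eq_bigr => i _; rewrite RintegralZl.
Qed.

Lemma integrable_trans_dens {h} (x : X h) a : (1 <= h < H)%N ->
  (nu h.+1).-integrable setT (EFin \o dens h x a).
Proof.
move=> hH; apply: (eq_integrable measurableT (EFin \o (fun y => 1 * dens h x a y))).
  by move=> y _ /=; rewrite mul1r.
by apply: (integrable_mul_trans_dens x a hH (measurable_cst (1:R))) => y; rewrite normr1.
Qed.

Lemma Rintegral_trans_dens {h} (x : X h) a : (1 <= h < H)%N ->
  Rintegral (nu h.+1) setT (dens h x a) = 1.
Proof. by move=> hH; rewrite /Rintegral /trans_dens (trans_dens_pdf h hH x a).2. Qed.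

Lemma norm_Rintegral_mul_trans_dens_le {h} (x : X h) a {f : X h.+1 -> R} {M} :
  (1 <= h < H)%N -> measurable_fun setT f -> 0 <= M -> (forall y, `|f y| <= M) ->
  `|Rintegral (nu h.+1) setT (fun y => f y * dens h x a y)| <= M.
Proof.
move=> hH mf M0 fM.
have [dens_ge0 _] := trans_dens_pdf h hH x a.
apply: le_trans (le_normr_Rintegral measurableT (integrable_mul_trans_dens x a hH mf fM)) _.
rewrite -[leRHS]mulr1 -(Rintegral_trans_dens x a hH) -RintegralZl //;
  last exact: integrable_trans_dens.
apply: le_Rintegral => //.
- exact/integrable_norm/(integrable_mul_trans_dens x a hH mf fM).
- exact/integrableZl_fun/integrable_trans_dens.
- by move=> y _ /=; rewrite normrM (ger0_norm (dens_ge0 y)) ler_wpM2r.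
Qed.

Definition act_avg (pi : @policy R dX X A) h (g : X h -> A -> R) (x : X h) : R :=
  \sum_(a : A) pi h x (Some a) * g x a.

Lemma Eaux0 pi k : E pi k (fun=> 0) = 0.
Proof.
elim: k => [|k IH] /=; first by rewrite Rintegral_cst // mul0r.
rewrite -[RHS]IH; congr (Eaux _ _ _ _ pi k); apply/funext => x.
rewrite /Pstep big1 // => a _.
under eq_Rintegral do rewrite mul0r.
by rewrite Rintegral_cst // !mul0r mulr0.
Qed.

Section Policy.
Context { pi : @policy R dX X A } (pi_markov : markov_policy pi).

Lemma policy_ge0 h x b : 0 <= pi h x b.
Proof. by have [+ _] := pi_markov h; apply. Qed.

Lemma sum_policy_Some_le1 h x : \sum_(a : A) pi h x (Some a) <= 1.
Proof.
have [_ [sum1 _]] := pi_markov h.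
by rewrite -(sum1 x) sum_option lerDr policy_ge0.
Qed.

Lemma measurable_policy h b : measurable_fun setT (fun x => pi h x b).
Proof. by have [_ [_ +]] := pi_markov h; apply. Qed.

Lemma norm_act_avg_le h (g : X h -> A -> R) M x :
  0 <= M -> (forall a, `|g x a| <= M) -> `|act_avg pi h g x| <= M.
Proof.
move=> M0 gM; apply: le_trans (ler_norm_sum _ _ _) _.
apply: (@le_trans _ _ (\sum_(a : A) pi h x (Some a) * M)).
  apply: ler_sum => a _.
  by rewrite normrM ger0_norm ?policy_ge0 // ler_wpM2l ?policy_ge0.
by rewrite -mulr_suml -[leRHS]mul1r ler_wpM2r // sum_policy_Some_le1.
Qed.

Lemma measurable_act_avg h (g : X h -> A -> R) :
  (forall a, measurable_fun setT (g^~ a)) -> measurable_fun setT (act_avg pi h g).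
Proof.
move=> mg; apply: measurable_sum => a.
by apply: measurable_funM; [exact: measurable_policy | exact: mg].
Qed.

Lemma bounded_mfun_act_avg h (g : X h -> A -> R) M : 0 <= M ->
  (forall a, measurable_fun setT (g^~ a)) -> (forall x a, `|g x a| <= M) ->
  bounded_mfun (act_avg pi h g).
Proof.
move=> M0 mg gM; split; first exact: measurable_act_avg.
by exists M => // x; exact: norm_act_avg_le.
Qed.

Lemma PstepE {h} {f : X h.+1 -> R} {M} : (1 <= h < H)%N ->
  measurable_fun setT f -> (forall y, `|f y| <= M) ->
  P pi h f = act_avg pi h (fun x a =>
    \sum_i phi h x a i * Rintegral (nu h.+1) setT (fun y => mu h.+1 y i * f y)).
Proof.
move=> hH mf fM; apply/funext => x; apply: eq_bigr => a _.
by rewrite (Rintegral_mul_trans_densE x a hH mf fM).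
Qed.

Lemma norm_Pstep_le {h} {f : X h.+1 -> R} {M} : (1 <= h < H)%N ->
  measurable_fun setT f -> 0 <= M -> (forall y, `|f y| <= M) ->
  forall x, `|P pi h f x| <= M.
Proof.
move=> hH mf M0 fM x.
pose g x a := Rintegral (nu h.+1) setT (fun y => f y * dens h x a y).
apply: (norm_act_avg_le h g) => // a.
exact: norm_Rintegral_mul_trans_dens_le.
Qed.

Lemma measurable_Pstep {h} {f : X h.+1 -> R} {M} : (1 <= h < H)%N ->
  measurable_fun setT f -> (forall y, `|f y| <= M) -> measurable_fun setT (P pi h f).
Proof.
move=> hH mf fM; rewrite (PstepE hH mf fM); apply: measurable_act_avg => a /=.
by apply: measurable_sum => i; apply: measurable_funM => //; exact: measurable_cst.
Qed.

Lemma bounded_mfun_Pstep {h} {f : X h.+1 -> R} : (1 <= h < H)%N ->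
  bounded_mfun f -> bounded_mfun (P pi h f).
Proof.
move=> hH [mf [M M0 fM]]; split; first exact: measurable_Pstep mf fM.
by exists M => //; exact: norm_Pstep_le.
Qed.

Lemma PstepD {h} {f g : X h.+1 -> R} : (1 <= h < H)%N ->
  bounded_mfun f -> bounded_mfun g ->
  P pi h (fun y => f y + g y) = fun x => P pi h f x + P pi h g x.
Proof.
move=> hH [mf [Mf _ fM]] [mg [Mg _ gM]]; apply/funext => x.
rewrite /Pstep -big_split /=; apply: eq_bigr => a _; rewrite -mulrDr; congr (_ * _).
rewrite -RintegralD //; last 2 first.
- exact: integrable_mul_trans_dens _ _ hH mf fM.
- exact: integrable_mul_trans_dens _ _ hH mg gM.
by apply: eq_Rintegral => y _; rewrite mulrDl.
Qed.

Lemma PstepZ {h} (c : R) {f : X h.+1 -> R} : (1 <= h < H)%N ->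
  bounded_mfun f -> P pi h (fun y => c * f y) = fun x => c * P pi h f x.
Proof.
move=> hH [mf [M _ fM]]; apply/funext => x; rewrite /Pstep mulr_sumr.
apply: eq_bigr => a _; rewrite mulrCA; congr (_ * _).
rewrite -RintegralZl //; last exact: integrable_mul_trans_dens _ _ hH mf fM.
by apply: eq_Rintegral => y _; rewrite mulrA.
Qed.

Lemma Pstep_le {h} {f g : X h.+1 -> R} : (1 <= h < H)%N ->
  bounded_mfun f -> bounded_mfun g -> (forall y, f y <= g y) ->
  forall x, P pi h f x <= P pi h g x.
Proof.
move=> hH [mf [Mf _ fM]] [mg [Mg _ gM]] fg x; apply: ler_sum => a _.
rewrite ler_wpM2l ?policy_ge0 //; apply: le_Rintegral => //.
- exact: integrable_mul_trans_dens _ _ hH mf fM.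
- exact: integrable_mul_trans_dens _ _ hH mg gM.
- by move=> y _; rewrite ler_wpM2r ?fg //; exact: (trans_dens_pdf h hH x a).1.
Qed.

Lemma norm_Eaux_le k (f : X k.+1 -> R) M : (k < H)%N ->
  measurable_fun setT f -> 0 <= M -> (forall x, `|f x| <= M) -> `|E pi k f| <= M.
Proof.
elim: k f => [|k IH] f kH mf M0 fM /=; first exact: norm_Rintegral_prob_le.
have hH : (1 <= k.+1 < H)%N by rewrite /= kH.
exact: IH (ltnW kH) (measurable_Pstep hH mf fM) M0 (norm_Pstep_le hH mf M0 fM).
Qed.

Lemma EauxD k (f g : X k.+1 -> R) : (k < H)%N ->
  bounded_mfun f -> bounded_mfun g -> E pi k (fun x => f x + g x) = E pi k f + E pi k g.
Proof.
elim: k f g => [|k IH] f g kH bf bg /=.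
  by apply: RintegralD => //; exact: bounded_mfun_integrable.
have hH : (1 <= k.+1 < H)%N by rewrite /= kH.
have kH' := ltnW kH.
by rewrite (PstepD hH bf bg) IH //; exact: bounded_mfun_Pstep.
Qed.

Lemma EauxZ k (c : R) (f : X k.+1 -> R) : (k < H)%N ->
  bounded_mfun f -> E pi k (fun x => c * f x) = c * E pi k f.
Proof.
elim: k f => [|k IH] f kH bf /=.
  by apply: RintegralZl => //; exact: bounded_mfun_integrable.
have hH : (1 <= k.+1 < H)%N by rewrite /= kH.
have kH' := ltnW kH.
by rewrite (PstepZ c hH bf) IH //; exact: bounded_mfun_Pstep.
Qed.

Lemma Eaux_le k (f g : X k.+1 -> R) : (k < H)%N ->
  bounded_mfun f -> bounded_mfun g -> (forall x, f x <= g x) -> E pi k f <= E pi k g.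
Proof.
elim: k f g => [|k IH] f g kH bf bg fg /=.
  by apply: le_Rintegral => //; exact: bounded_mfun_integrable.
have hH : (1 <= k.+1 < H)%N by rewrite /= kH.
apply: IH; [exact: ltnW | exact: bounded_mfun_Pstep | exact: bounded_mfun_Pstep |].
exact: Pstep_le.
Qed.

Lemma Eaux_sum k (I : Type) (s : seq I) (F : I -> X k.+1 -> R) : (k < H)%N ->
  (forall i, bounded_mfun (F i)) ->
  E pi k (fun x => \sum_(i <- s) F i x) = \sum_(i <- s) E pi k (F i).
Proof.
move=> kH bF; elim: s => [|i s IH].
  have -> : (fun x => \sum_(i <- [::]) F i x) = fun=> 0 by apply/funext => x; rewrite big_nil.
  by rewrite big_nil Eaux0.
rewrite big_cons -IH -EauxD //; last exact: bounded_mfun_sum.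
by congr (Eaux _ _ _ _ pi k); apply/funext => x; rewrite big_cons.
Qed.

End Policy.

Lemma eq_Eaux (pi pi' : @policy R dX X A) k (f : X k.+1 -> R) :
  (forall t, (t <= k)%N -> pi t = pi' t) -> E pi k f = E pi' k f.
Proof.
elim: k f => [|k IH] f eq_pi //=.
rewrite (IH _ (fun t tk => eq_pi t (leqW tk))); congr (Eaux _ _ _ _ _ _).
by apply/funext => x; rewrite /Pstep (eq_pi k.+1 (leqnn _)).
Qed.

Lemma value_Eaux (r : forall h, X h -> A -> R) (pi : @policy R dX X A) :
  value nu rho phi mu H r pi = \sum_(k < H) E pi k (act_avg pi k.+1 (r k.+1)).
Proof. by rewrite /value big_add1 /= big_mkord. Qed.

Lemma mul_occ_densE pi i (f : X i.+2 -> R) :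
  (fun y => f y * occ_dens nu rho phi mu pi i y) =
  fun y => \sum_c E pi i (act_avg pi i.+1 (fun x a => phi i.+1 x a c)) * (mu i.+2 y c * f y).
Proof.
apply/funext => y; rewrite /occ_dens /dotv mulr_sumr.
by apply: eq_bigr => c _; rewrite /act_avg; ring.
Qed.

Section Occupancy.
Context { pi : @policy R dX X A } {i : nat} {f : X i.+2 -> R} {M : R}.
Hypotheses (pi_markov : markov_policy pi) (iH : (i.+2 <= H)%N)
  (mf : measurable_fun setT f) (fM : forall y, `|f y| <= M).

Let h2H : (2 <= i.+2 <= H)%N. Proof. by []. Qed.

Lemma integrable_mul_occ_dens :
  (nu i.+2).-integrable setT (EFin \o (fun y => f y * occ_dens nu rho phi mu pi i y)).
Proof.
rewrite mul_occ_densE; apply: integrable_sumr => c.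
exact/integrableZl_fun/(integrable_mu_mul c h2H mf fM).
Qed.

Lemma Eaux_occ_densE :
  E pi i.+1 f = Rintegral (nu i.+2) setT (fun y => f y * occ_dens nu rho phi mu pi i y).
Proof.
have hH : (1 <= i.+1 < H)%N by [].
have iH' : (i < H)%N := ltnW iH.
pose w c := act_avg pi i.+1 (fun x a => phi i.+1 x a c).
pose C c := Rintegral (nu i.+2) setT (fun y => mu i.+2 y c * f y).
have bw c : bounded_mfun (w c).
  apply: (bounded_mfun_act_avg pi_markov _ _ 1) => [|a|y a]; first exact: ler01.
    exact: phi_meas.
  exact: le_trans (ler_coord_enorm _ c) (enorm_phi_le1 _ hH y a).
have Pf : P pi i.+1 f = fun y => \sum_c C c * w c y.
  rewrite (PstepE hH mf fM); apply/funext => y; rewrite /act_avg.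
  under eq_bigr do rewrite mulr_sumr.
  rewrite exchange_big /=; apply: eq_bigr => c _.
  by rewrite mulr_sumr; apply: eq_bigr => a _; rewrite /C; ring.
have -> : E pi i.+1 f = \sum_c E pi i (w c) * C c.
  rewrite /= Pf Eaux_sum //; last by move=> c; exact: bounded_mfunZ.
  by apply: eq_bigr => c _; rewrite (EauxZ pi_markov _ _ _ iH' (bw c)) mulrC.
rewrite mul_occ_densE Rintegral_sum => [|c].
  by apply: eq_bigr => c _; rewrite RintegralZl //; have := integrable_mu_mul c h2H mf fM.
exact/integrableZl_fun/(integrable_mu_mul c h2H mf fM).
Qed.

End Occupancy.

Lemma Eaux_indicC_le (eta : R) pi i (S : set (X i.+2)) :
  markov_policy pi -> (i.+2 <= H)%N -> measurable S -> 0 <= eta ->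
  (forall x, ~ S x -> occ_dens nu rho phi mu pi i x < eta * enorm (mu i.+2 x)) ->
  E pi i.+1 (\1_(~` S)) <= eta * (dim%:R * (2 * Num.sqrt dim%:R)).
Proof.
move=> pi_markov iH mS eta0 occ_lt.
have h2H : (2 <= i.+2 <= H)%N by [].
have [mind [M _ indM]] := bounded_mfun_indic (R := R) _ (measurableC mS).
have int_norm_mu c : (nu i.+2).-integrable setT (EFin \o (fun y => `|mu i.+2 y c|)).
  have /integrable_norm := integrable_mu_mul c h2H (measurable_cst (1 : R)) (fun=> lexx `|1|).
  by apply: eq_integrable => // y _ /=; rewrite mulr1.
have int_bound : (nu i.+2).-integrable setT
    (EFin \o (fun y => eta * \sum_c `|mu i.+2 y c|)).
  exact/integrableZl_fun/integrable_sumr.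
rewrite (Eaux_occ_densE pi_markov iH mind indM).
apply: le_trans (le_Rintegral measurableT (integrable_mul_occ_dens iH mind indM)
  int_bound _) _.
  move=> y _; rewrite indicE; case: (boolP (y \in ~` S)) => yS.
    rewrite mul1r; apply/ltW; apply: lt_le_trans (occ_lt y _) _.
      by move=> Sy; move: yS; rewrite in_setC (mem_set Sy).
    by rewrite ler_wpM2l // enorm_le_sum_norm.
  by rewrite mul0r mulr_ge0 // sumr_ge0.
rewrite RintegralZl //; last exact: integrable_sumr.
rewrite Rintegral_sum // ler_wpM2l //.
apply: (@le_trans _ _ (\sum_(c < dim) 2 * Num.sqrt dim%:R)).
  by apply: ler_sum => c _; exact: Rintegral_norm_mu_le.
by rewrite sumr_const card_ord [in leRHS]mulrC mulr_natr.
Qed.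

Lemma markov_policy_term_act : markov_policy (fun (h : nat) (x : X h) => @term_act R A).
Proof.
move=> h; split; [|split].
- by move=> x [a|]; rewrite /term_act ?ler01 ?lexx.
- by move=> x; rewrite sum_option /term_act big1 ?addr0.
- by move=> b; exact: measurable_cst.
Qed.

Lemma markov_policy_stop { pi pi' : @policy R dX X A } {m} {S : set (X m)} :
  markov_policy pi -> measurable S -> (forall t, t <> m -> pi' t = pi t) ->
  (forall x, S x -> pi' m x = pi m x) -> (forall x, ~ S x -> pi' m x = term_act) ->
  markov_policy pi'.
Proof.
move=> pi_markov mS pi'_off pi'_in pi'_out t.
have [->|tm] := eqVneq t m; last by rewrite pi'_off //; exact/eqP.
have [_ [sum1 _]] := pi_markov m.
have [term_ge0 [term_sum1 _]] := markov_policy_term_act m.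
split; [|split].
- move=> x b; have [Sx|nSx] := pselect (S x).
    by rewrite pi'_in //; exact: policy_ge0.
  by rewrite pi'_out //; exact: term_ge0.
- move=> x; have [Sx|nSx] := pselect (S x); first by rewrite pi'_in.
  by rewrite pi'_out //; exact: term_sum1.
- move=> b.
  have -> : (fun x => pi' m x b) = fun x => \1_S x * pi m x b + (1 - \1_S x) * term_act b.
    apply/funext => x; rewrite indicE; case: (boolP (x \in S)) => xS.
      by rewrite pi'_in ?mul1r ?subrr ?mul0r ?addr0 //; exact: set_mem.
    by rewrite pi'_out ?mul0r ?add0r ?subr0 ?mul1r // => Sx; move: xS; rewrite (mem_set Sx).
  apply: measurable_funD; apply: measurable_funM.
  + exact: measurable_indic.
  + exact: measurable_policy.
  + by apply: measurable_funB; [exact: measurable_cst | exact: measurable_indic].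
  + exact: measurable_cst.
Qed.

Section Rewards.
Context {r : forall h : nat, X h -> A -> R} {B : nat -> R}.
Hypotheses (B_gt0 : forall h : nat, (1 <= h <= H)%N -> 0 < B h)
  (r_meas : forall (h : nat) (a : A), measurable_fun setT (fun x : X h => r h x a))
  (norm_r_le : forall h : nat, (1 <= h <= H)%N -> forall (x : X h) (a : A), `|r h x a| <= B h).

Lemma norm_act_avg_reward_le { pi } {k} : markov_policy pi -> (k < H)%N ->
  forall x, `|act_avg pi k.+1 (r k.+1) x| <= B k.+1.
Proof.
move=> pi_markov kH x; apply: norm_act_avg_le => //; first exact/ltW/B_gt0.
by move=> a; exact: norm_r_le.
Qed.

Lemma bounded_mfun_act_avg_reward { pi } {k} : markov_policy pi -> (k < H)%N ->
  bounded_mfun (act_avg pi k.+1 (r k.+1)).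
Proof.
move=> pi_markov kH; apply: (bounded_mfun_act_avg pi_markov _ _ (B k.+1)).
- exact/ltW/B_gt0.
- by move=> a; exact: r_meas.
- by move=> x a; exact: norm_r_le.
Qed.

Lemma norm_value_le pi : markov_policy pi ->
  `|value nu rho phi mu H r pi| <= \sum_(k < H) B k.+1.
Proof.
move=> pi_markov; rewrite value_Eaux; apply: le_trans (ler_norm_sum _ _ _) _.
apply: ler_sum => k _; have kH := ltn_ord k.
have [mr _] := bounded_mfun_act_avg_reward pi_markov kH.
apply: norm_Eaux_le => //; first exact/ltW/B_gt0.
exact: norm_act_avg_reward_le.
Qed.

Section Stop.
Context { pi pi' : @policy R dX X A } {j : nat} {S : set (X j.+1)}.
Hypotheses (pi_markov : markov_policy pi) (jH : (j < H)%N) (mS : measurable S)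
  (pi'_off : forall t, t <> j.+1 -> pi' t = pi t)
  (pi'_in : forall x, S x -> pi' j.+1 x = pi j.+1 x)
  (pi'_out : forall x, ~ S x -> pi' j.+1 x = term_act).

Let stop_prob := E pi j (\1_(~` S)).

Lemma stop_prob_ge0 : 0 <= stop_prob.
Proof.
rewrite /stop_prob -(Eaux0 pi j); apply: Eaux_le => //.
  exact: bounded_mfun_cst.
exact: bounded_mfun_indic (measurableC mS).
Qed.

Lemma stop_policy_agree t : (t <= j)%N -> pi' t = pi t.
Proof. by move=> tj; apply: pi'_off => tj1; move: tj; rewrite tj1 ltnn. Qed.

Lemma act_avg_stop (g : X j.+1 -> A -> R) x :
  act_avg pi' j.+1 g x = \1_S x * act_avg pi j.+1 g x.
Proof.
rewrite /act_avg indicE; case: (boolP (x \in S)) => xS.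
  by rewrite pi'_in ?mul1r //; exact: set_mem.
rewrite pi'_out ?mul0r; last by move=> Sx; move: xS; rewrite (mem_set Sx).
by apply: big1 => a _; rewrite /term_act mul0r.
Qed.

Lemma Pstep_stop (f : X j.+2 -> R) : P pi' j.+1 f = fun x => \1_S x * P pi j.+1 f x.
Proof.
apply/funext => x.
exact: (act_avg_stop (fun x a => Rintegral (nu j.+2) setT (fun y => f y * dens j.+1 x a y))).
Qed.

Lemma norm_Eaux_indic_diff_le (F : X j.+1 -> R) M : bounded_mfun F -> 0 <= M ->
  (forall x, `|F x| <= M) -> `|E pi j F - E pi j (fun x => \1_S x * F x)| <= M * stop_prob.
Proof.
move=> bF M0 FM.
have bSC := bounded_mfun_indic (R := R) _ (measurableC mS).
have bSF : bounded_mfun (fun x => \1_S x * F x).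
  exact/bounded_mfunM/bF/bounded_mfun_indic.
have bSCF : bounded_mfun (fun x => \1_(~` S) x * F x) by exact: bounded_mfunM.
have -> : E pi j F - E pi j (fun x => \1_S x * F x) = E pi j (fun x => \1_(~` S) x * F x).
  rewrite -mulN1r -(EauxZ pi_markov) // -EauxD //; last exact: bounded_mfunZ.
  by congr (Eaux _ _ _ _ pi j); apply/funext => x; rewrite indicCB; ring.
rewrite /stop_prob ler_norml -mulNr -!(EauxZ pi_markov) //.
apply/andP; split; apply: Eaux_le => //; try exact: bounded_mfunZ.
  move=> x; rewrite indicE; case: (x \in ~` S); rewrite ?mul1r ?mulr1 ?mul0r ?mulr0 //.
  by rewrite lerNl; apply: le_trans (FM x); rewrite -normrN ler_norm.
move=> x; rewrite indicE; case: (x \in ~` S); rewrite ?mul1r ?mulr1 ?mul0r ?mulr0 //.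
by apply: le_trans (FM x); exact: ler_norm.
Qed.

Lemma norm_Eaux_stop_diff_le k : (j < k)%N -> (k < H)%N ->
  forall (f : X k.+1 -> R) M, bounded_mfun f -> 0 <= M -> (forall x, `|f x| <= M) ->
  `|E pi k f - E pi' k f| <= M * stop_prob.
Proof.
elim: k => [//|k IH] jk kH f M bf M0 fM /=.
have hH : (1 <= k.+1 < H)%N by rewrite /= kH.
have [mf _] := bf.
have bPf := bounded_mfun_Pstep pi_markov hH bf.
have PfM := norm_Pstep_le pi_markov hH mf M0 fM.
case: (eqVneq j k) => [ejk|njk].
  subst k; rewrite Pstep_stop (eq_Eaux pi' pi j _ stop_policy_agree).
  exact: norm_Eaux_indic_diff_le.
have jk' : (j < k)%N by rewrite ltn_neqAle njk -ltnS.
rewrite /Pstep (pi'_off k.+1); last by move=> [ejk]; move: njk; rewrite ejk eqxx.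
exact: IH (ltnW kH) _ _ bPf M0 PfM.
Qed.

Lemma norm_Eaux_reward_stop_le k : (k < H)%N ->
  `|E pi k (act_avg pi k.+1 (r k.+1)) - E pi' k (act_avg pi' k.+1 (r k.+1))|
    <= B k.+1 * stop_prob.
Proof.
move=> kH; have B0 : 0 <= B k.+1 by exact/ltW/B_gt0.
have br := bounded_mfun_act_avg_reward pi_markov kH.
have rB := norm_act_avg_reward_le pi_markov kH.
case: (ltngtP k j) => [kj|jk|ekj].
- have pi'k : pi' k.+1 = pi k.+1 by apply: pi'_off => /succn_inj; lia.
  rewrite /act_avg pi'k (eq_Eaux pi' pi k); last by move=> t tk; apply: pi'_off; lia.
  by rewrite subrr normr0 mulr_ge0 // stop_prob_ge0.
- have pi'k : pi' k.+1 = pi k.+1 by apply: pi'_off => /succn_inj; lia.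
  rewrite /act_avg pi'k; exact: norm_Eaux_stop_diff_le.
- subst k; have -> : act_avg pi' j.+1 (r j.+1) = fun x => \1_S x * act_avg pi j.+1 (r j.+1) x.
    by apply/funext => x; exact: act_avg_stop.
  rewrite (eq_Eaux pi' pi j _ stop_policy_agree).
  exact: norm_Eaux_indic_diff_le.
Qed.

Lemma value_stop_ge :
  value nu rho phi mu H r pi - (\sum_(k < H) B k.+1) * stop_prob
    <= value nu rho phi mu H r pi'.
Proof.
rewrite !value_Eaux lerBlDr -lerBlDl -sumrB mulr_suml.
apply: ler_sum => k _; apply: le_trans (ler_norm _) _.
exact: norm_Eaux_reward_stop_le.
Qed.

End Stop.

Section Truncation.
Context {eta : R}.
Hypotheses (eta_ge0 : 0 <= eta)
  (reachable_meas : forall h : nat, (2 <= h <= H)%N ->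
      measurable (reachable nu rho phi mu eta (trunc_class nu rho phi mu eta h.-1) h)).

Local Notation TC := (trunc_class nu rho phi mu eta).
Local Notation RE := (reachable nu rho phi mu eta).

Lemma measurable_reachable {n} : (n < H)%N -> measurable (RE (TC n) n.+1).
Proof. by case: n => [|n] nH; [exact: measurableT | exact: reachable_meas]. Qed.

Lemma trunc_class_markov {n} { pi } : (n <= H)%N -> TC n pi -> markov_policy pi.
Proof.
elim: n pi => [//|n IH] pi nH [pin tn [pi_off pi_reach]].
apply: (markov_policy_stop (IH pin (ltnW nH) tn) (measurable_reachable nH) pi_off).
- by move=> x Sx; exact: (pi_reach x).1.
- by move=> x nSx; exact: (pi_reach x).2.
Qed.

Lemma Eaux_unreachable_le {n} { pi } : (n < H)%N -> TC n pi ->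
  E pi n (\1_(~` RE (TC n) n.+1)) <= eta * (dim%:R * (2 * Num.sqrt dim%:R)).
Proof.
move=> nH tn; have pi_markov := trunc_class_markov (ltnW nH) tn.
case: n nH tn pi_markov => [|i] nH tn pi_markov.
  have -> : (\1_(~` RE (TC 0) 1) : X 1 -> R) = fun=> 0.
    by apply/funext => x; rewrite indicC /= in_setT.
  by rewrite Eaux0 !mulr_ge0 ?sqrtr_ge0.
apply: Eaux_indicC_le => // [|x unreached]; first exact: measurable_reachable.
by rewrite ltNge; apply/negP => le_occ; apply: unreached; exists pi.
Qed.

Lemma trunc_class_step {n} { pin } : (n < H)%N -> TC n pin ->
  exists2 pi, TC n.+1 pi & value nu rho phi mu H r pin
    - (\sum_(k < H) B k.+1) * (eta * (dim%:R * (2 * Num.sqrt dim%:R)))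
    <= value nu rho phi mu H r pi.
Proof.
move=> nH tn; have pin_markov := trunc_class_markov (ltnW nH) tn.
pose Sf t := RE (TC n) t.
pose pi' : @policy R dX X A := fun t x b =>
  if (t == n.+1) && ~~ `[< Sf t x >] then term_act b else pin t x b.
have pi'_off t : t <> n.+1 -> pi' t = pin t.
  by move=> /eqP/negbTE tn1; apply/funext => x; apply/funext => b; rewrite /pi' tn1.
have pi'_in x : Sf n.+1 x -> pi' n.+1 x = pin n.+1 x.
  by move=> Sx; apply/funext => b; rewrite /pi' eqxx (asboolT Sx).
have pi'_out x : ~ Sf n.+1 x -> pi' n.+1 x = term_act.
  by move=> nSx; apply/funext => b; rewrite /pi' eqxx (asboolF nSx).
exists pi'; first by exists pin => //; split => // x; split; [exact: pi'_in | exact: pi'_out].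
have SB0 : 0 <= \sum_(k < H) B k.+1 by apply: sumr_ge0 => k _; apply/ltW/B_gt0; rewrite /= ltn_ord.
have := value_stop_ge pin_markov nH (measurable_reachable nH) pi'_off pi'_in pi'_out.
have := ler_wpM2l SB0 (Eaux_unreachable_le nH tn).
lra.
Qed.

Lemma trunc_class_value_ge { pi0 } {n} : markov_policy pi0 -> (n <= H)%N ->
  exists2 pi, TC n pi & value nu rho phi mu H r pi0
    - n%:R * ((\sum_(k < H) B k.+1) * (eta * (dim%:R * (2 * Num.sqrt dim%:R))))
    <= value nu rho phi mu H r pi.
Proof.
move=> pi0_markov; elim: n => [|n IH] nH; first by exists pi0; rewrite ?mul0r ?subr0.
have [pin tn vn] := IH (ltnW nH).
have [pi tpi vpi] := trunc_class_step nH tn.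
by exists pi => //; move: vn vpi; rewrite -natr1; lra.
Qed.

Lemma trunc_class_value_le { pi } : TC H pi -> value nu rho phi mu H r pi <= \sum_(k < H) B k.+1.
Proof.
move=> tpi; apply: le_trans (ler_norm _) _.
exact/norm_value_le/(trunc_class_markov (leqnn H) tpi).
Qed.

End Truncation.
End Rewards.
End LowRankMDP.

Theorem mainTheorem13 (R : realType) (dX : nat -> measure_display)
  (X : forall h : nat, measurableType (dX h)) (A : finType) (H dim : nat)
  (nu : forall h : nat, {measure set (X h) -> \bar R})
  (rho : probability (X 1) R)
  (phi : forall h : nat, X h -> A -> 'I_dim -> R)
  (mu : forall h : nat, X h -> 'I_dim -> R)
  (eta : R) (B : nat -> R) (r : forall h : nat, X h -> A -> R) :
  (forall h : nat, sigma_finite setT (nu h)) ->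
  (forall (h : nat) (a : A) (i : 'I_dim), measurable_fun setT (fun x : X h => phi h x a i)) ->
  (forall (h : nat) (i : 'I_dim), measurable_fun setT (fun x : X h => mu h x i)) ->
  (forall h : nat, (1 <= h < H)%N -> forall (x : X h) (a : A), enorm (phi h x a) <= 1) ->
  (forall h : nat, (1 <= h < H)%N -> forall (x : X h) (a : A),
      (forall y : X h.+1, 0 <= dotv (mu h.+1 y) (phi h x a)) /\
      (\int[nu h.+1]_(y in setT) (dotv (mu h.+1 y) (phi h x a))%:E = 1)%E) ->
  (forall h : nat, (2 <= h <= H)%N -> forall g : X h -> R,
      measurable_fun setT g -> (forall x, 0 <= g x <= 1) ->
      (forall i : 'I_dim, (nu h).-integrable setT (fun x => (mu h x i * g x)%:E)) /\
      enorm (fun i : 'I_dim => Rintegral (nu h) setT (fun x => mu h x i * g x))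
        <= Num.sqrt (dim%:R)) ->
  0 < eta < 1 ->
  (forall h : nat, (1 <= h <= H)%N -> 0 < B h) ->
  (forall (h : nat) (a : A), measurable_fun setT (fun x : X h => r h x a)) ->
  (forall h : nat, (1 <= h <= H)%N -> forall (x : X h) (a : A), `|r h x a| <= B h) ->
  (* technical: the reachable sets used in the truncation are measurable *)
  (forall h : nat, (2 <= h <= H)%N ->
      measurable (reachable nu rho phi mu eta (trunc_class nu rho phi mu eta h.-1) h)) ->
  sup [set value nu rho phi mu H r pi | pi in trunc_class nu rho phi mu eta H]
  >= sup [set value nu rho phi mu H r pi | pi in markov_policy]
     - 2 * H%:R * (dim%:R `^ (3 / 2)) * eta * \sum_(1 <= h < H.+1) B h.
Proof.
move=> _ phi_meas mu_meas phi_le1 dens_pdf mu_bounded /andP[eta_gt0 _] B_gt0 r_meas r_le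
  reach_meas.
have eta_ge0 := ltW eta_gt0.
pose K := eta * (dim%:R * (2 * Num.sqrt dim%:R)).
have value_ge pi : markov_policy pi -> exists2 pi', trunc_class nu rho phi mu eta H pi' &
    value nu rho phi mu H r pi - H%:R * ((\sum_(k < H) B k.+1) * K)
      <= value nu rho phi mu H r pi'.
  by move=> pi_markov; apply: trunc_class_value_ge.
have value_le pi : trunc_class nu rho phi mu eta H pi ->
    value nu rho phi mu H r pi <= \sum_(k < H) B k.+1.
  exact: trunc_class_value_le.
have -> : 2 * H%:R * dim%:R `^ (3 / 2) * eta * \sum_(1 <= h < H.+1) B h =
    H%:R * ((\sum_(k < H) B k.+1) * K).
  by rewrite powR32_sqrt // big_add1 big_mkord /K; ring.
rewrite lerBlDr; apply: sup_le_sup_add.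
- exists (value nu rho phi mu H r (fun h (x : X h) => @term_act R A)).
  by exists (fun h (x : X h) => @term_act R A) => //; exact: markov_policy_term_act.
- have [pi tpi _] := value_ge _ (markov_policy_term_act (R := R) (X := X) (A := A)).
  split; first by exists (value nu rho phi mu H r pi), pi.
  by exists (\sum_(k < H) B k.+1) => _ [pi' tpi' <-]; exact: value_le.
- move=> _ [pi pi_markov <-]; have [pi' tpi' le_pi'] := value_ge pi pi_markov.
  by exists (value nu rho phi mu H r pi'); [exists pi' | lra].
Qed.
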